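(* Let $r\ge 0$, $t>0$, $\phi,b\in\mathbb{R}$ and $f(\theta)=-r\cos(2\theta t-\phi)+b$, with derivative $f'(\theta)=2rt\sin(2\theta t-\phi)$. Define the curvature function $$w(\theta)=\begin{cases}\dfrac{f'(\theta)}{\mathrm{mod}\!\big(\theta-\frac{\phi}{2t}+\frac{\pi}{2t},\frac{2\pi}{2t}\big)-\frac{\pi}{2t}} & \theta\notin\{\frac{\phi+2\pi m}{2t}:m\in\mathbb{Z}\},\\ 4t^2r & \theta\in\{\frac{\phi+2\pi m}{2t}:m\in\mathbb{Z}\},\end{cases}$$ where a $0/0$ (denominator equal to $0$, which forces $f'(\theta)=0$) is replaced by... — more precisely, whenever the denominator is nonzero use the quotient. Then for every $\theta'\in\mathbb{R}$ for which the denominator is nonzero or $\theta'\in\{\frac{\phi+2\pi m}{2t}\}$, the quadratic $$q(\theta;\theta')=f(\theta')+f'(\theta')(\theta-\theta')+\tfrac12 w(\theta')(\theta-\theta')^2$$ satisfies $q(\theta';\theta')=f(\theta')$ and $q(\theta;\theta')\ge f(\theta)$ for all $\theta\in\mathbb{R}$. Consequently, for $f_i(\theta)=-r_i\cos(2\theta t_i-\phi_i)+b_i$ ($i=1,\dots,T$, $r_i\ge0$, $t_i>0$) with corresponding $w_i$, if $\sum_iw_i(\theta')>0$ then $\theta^+=\theta'-\sum_if_i'(\theta')/\sum_iw_i(\theta')$ satisfies $\sum_if_i(\theta^+)\le\sum_if_i(\theta')$.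
   Context: For $a\in\mathbb{R}$, $p>0$, $\mathrm{mod}(a,p)=a-p\lfloor a/p\rfloor\in[0,p)$. The denominator in the first case of $w$ vanishes exactly when $\theta\in\{\frac{\phi+\pi+2\pi m}{2t}:m\in\mathbb{Z}\}$ (the maximizers of $f$), where $f'=0$; these points are excluded from the claim. *)

From Stdlib Require Import Reals Lra List ClassicalDescription.
Open Scope R_scope.

(* mod(a,p) = a - p * floor(a/p); Int_part x = floor x *)
Definition Rmod (a p : R) : R := a - p * IZR (Int_part (a / p)).

Definition fcos (r t phi b theta : R) : R := - r * cos (2 * theta * t - phi) + b.

Definition fcos' (r t phi theta : R) : R := 2 * r * t * sin (2 * theta * t - phi).

Definition in_minset (t phi theta : R) : Prop :=
  exists m : Z, theta = (phi + 2 * PI * IZR m) / (2 * t).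

Definition wden (t phi theta : R) : R :=
  Rmod (theta - phi / (2 * t) + PI / (2 * t)) (2 * PI / (2 * t)) - PI / (2 * t).

Definition wcurv (r t phi theta : R) : R :=
  if excluded_middle_informative (in_minset t phi theta)
  then 4 * t ^ 2 * r
  else fcos' r t phi theta / wden t phi theta.

Definition qmaj (r t phi b theta' theta : R) : R :=
  fcos r t phi b theta' + fcos' r t phi theta' * (theta - theta')
  + / 2 * wcurv r t phi theta' * (theta - theta') ^ 2.

Definition sumR (T : nat) (g : nat -> R) : R := fold_right Rplus 0 (map g (seq 0 T)).

(* The whole theorem rests on one inequality about the cosine: for every
   v ∈ [-π, π] and every x,
       -cos x <= -cos v + sin v·(x - v) + sinc(v)/2·(x - v)²,
   with sinc v = sin v / v (and sinc 0 = 1).  For 0 < v <= π it says that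
   k(x) = sinc(v)·x²/2 + cos x is minimized at v: k'(x) = x·(sinc v - sinc x)
   changes sign at v on [0, π] because sinc is nonincreasing there, k is even,
   and beyond π the quadratic term dominates; v = 0 is 1 - cos x <= x²/2 and
   v < 0 follows by symmetry.

   For f(θ) = -r cos(2θt - φ) + b, the denominator of w is the phase 2θ't - φ
   reduced modulo 2π into [-π, π) and divided by 2t; substituting x = 2θt - φ
   shows that w(θ') = 4t²r·sinc(v) for the reduced phase v, and the cosine
   inequality becomes q(θ; θ') >= f(θ).  Summing the majorizers over the
   terms f_i gives a convex quadratic model of Σ f_i; its Newton step θ⁺
   lowers the model, hence Σ f_i (majorization-minimization). *)

From Stdlib Require Import Reals ClassicalDescription Lra Lia List ZArith.
From Coquelicot Require Import Coquelicot.
Open Scope R_scope.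

Lemma periodic_Z (f : R -> R) :
  (forall x k, f (x + 2 * INR k * PI) = f x) ->
  forall x n, f (x + 2 * IZR n * PI) = f x.
Proof.
  intros Hper x n. destruct (Z_le_gt_dec 0 n) as [Hn|Hn].
  - rewrite <- (Z2Nat.id n Hn), <- INR_IZR_INZ. apply Hper.
  - set (k := Z.to_nat (- n)).
    assert (En : IZR n = - INR k)
      by (unfold k; rewrite INR_IZR_INZ, Z2Nat.id by lia; rewrite <- opp_IZR; f_equal; lia).
    rewrite En, <- (Hper (x + 2 * - INR k * PI) k). f_equal; ring.
Qed.

Lemma cos_periodZ x n : cos (x + 2 * IZR n * PI) = cos x.
Proof. apply (periodic_Z cos cos_period). Qed.

Lemma sin_periodZ x n : sin (x + 2 * IZR n * PI) = sin x.
Proof. apply (periodic_Z sin sin_period). Qed.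

Lemma one_sub_cos_le y : 1 - cos y <= y ^ 2 / 2.
Proof.
  assert (Hpos : forall z, 0 < z -> 1 - cos z <= z ^ 2 / 2).
  { intros z Hz.
    destruct (MVT_cor2 (fun c => c ^ 2 / 2 + cos c) (fun c => c - sin c) 0 z Hz)
      as [d [Hd Hdz]].
    { intros u _. apply is_derive_Reals. auto_derive; auto. simpl; field. }
    rewrite cos_0 in Hd. assert (sin d < d) by (apply sin_lt_x; lra). nra. }
  destruct (Rtotal_order y 0) as [Hy|[Hy|Hy]].
  - rewrite <- cos_neg. replace (y ^ 2) with ((- y) ^ 2) by ring. apply Hpos; lra.
  - subst. rewrite cos_0. lra.
  - apply Hpos; lra.
Qed.

(* The derivative numerator of sin x / x is nonpositive on [0, π]. *)
Lemma x_cos_sub_sin_nonpos x : 0 <= x <= PI -> x * cos x - sin x <= 0.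
Proof.
  intros [H0 H1]. destruct (Rle_lt_or_eq_dec 0 x H0) as [Hx|Hx].
  2:{ subst. rewrite sin_0. lra. }
  destruct (MVT_cor2 (fun c => c * cos c - sin c) (fun c => - c * sin c) 0 x Hx)
    as [d [Hd Hdx]].
  { intros y _. apply is_derive_Reals. auto_derive; auto. ring. }
  rewrite cos_0, sin_0 in Hd.
  assert (0 <= sin d) by (apply sin_ge_0; lra).
  assert (0 <= d * sin d * x) by (apply Rmult_le_pos; [apply Rmult_le_pos|]; lra).
  nra.
Qed.

(* sin x / x is nonincreasing on (0, π], written without division. *)
Lemma sinc_antitone x y : 0 < x -> x <= y -> y <= PI -> x * sin y <= y * sin x.
Proof.
  intros Hx Hxy Hy. destruct (Rle_lt_or_eq_dec x y Hxy) as [Hlt|Heq].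
  2:{ subst; lra. }
  destruct (MVT_cor2 (fun c => sin c / c) (fun c => (c * cos c - sin c) / (c * c)) x y Hlt)
    as [d [Hd Hdxy]].
  { intros z Hz. apply is_derive_Reals. auto_derive; [lra|]. field. lra. }
  assert (Hnum := x_cos_sub_sin_nonpos d ltac:(lra)).
  assert (Hslope : (d * cos d - sin d) / (d * d) <= 0).
  { apply Rmult_le_0_r; [lra|]. left; apply Rinv_0_lt_compat; nra. }
  assert (Hq : sin y / y <= sin x / x) by nra.
  apply (Rmult_le_compat_r (x * y)) in Hq; [|nra].
  replace (sin y / y * (x * y)) with (x * sin y) in Hq by (field; lra).
  replace (sin x / x * (x * y)) with (y * sin x) in Hq by (field; lra).
  exact Hq.
Qed.

Definition sinc (v : R) : R := if Req_EM_T v 0 then 1 else sin v / v.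

Section SincQuadratic.
Variable v : R.
Hypothesis Hv : 0 < v <= PI.

Let k (x : R) : R := sin v / v * x ^ 2 / 2 + cos x.

(* On [0, π], v is a minimizer of k: k' = x (sinc v - sinc x) changes sign at v. *)
Lemma sinc_quadratic_min_on_0_PI x : 0 <= x <= PI -> k v <= k x.
Proof.
  intros Hx.
  assert (Hmvt : forall a b, a < b ->
            exists d, k b - k a = (sin v / v * d - sin d) * (b - a) /\ a < d < b).
  { intros a b Hab. apply (MVT_cor2 k (fun d => sin v / v * d - sin d) a b Hab).
    intros u _. apply is_derive_Reals. unfold k. auto_derive; auto. simpl; field. lra. }
  destruct (Rtotal_order x v) as [Hlt|[Heq|Hgt]].
  - destruct (Hmvt x v Hlt) as [d [E Hd]].
    assert (d * sin v <= v * sin d) by (apply sinc_antitone; lra).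
    assert (sin v / v * d - sin d <= 0).
    { replace (sin v / v * d - sin d) with ((d * sin v - v * sin d) / v) by (field; lra).
      apply Rmult_le_0_r; [lra|]. left; apply Rinv_0_lt_compat; lra. }
    nra.
  - subst; lra.
  - destruct (Hmvt v x Hgt) as [d [E Hd]].
    assert (v * sin d <= d * sin v) by (apply sinc_antitone; lra).
    assert (0 <= sin v / v * d - sin d).
    { replace (sin v / v * d - sin d) with ((d * sin v - v * sin d) / v) by (field; lra).
      apply Rdiv_le_0_compat; lra. }
    nra.
Qed.

(* k is even and exceeds k(π) beyond π, so v minimizes k on all of R. *)
Lemma sinc_quadratic_min x : k v <= k x.
Proof.
  assert (Hc : 0 <= sin v / v) by (apply Rdiv_le_0_compat; [apply sin_ge_0|]; lra).
  assert (Hnonneg : forall y, 0 <= y -> k v <= k y).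
  { intros y Hy. destruct (Rle_dec y PI) as [HyPI|HyPI].
    - apply sinc_quadratic_min_on_0_PI; lra.
    - assert (HPI := sinc_quadratic_min_on_0_PI PI ltac:(pose proof PI_RGT_0; lra)).
      unfold k in *. rewrite cos_PI in HPI.
      assert (-1 <= cos y) by apply COS_bound.
      assert (sin v / v * PI ^ 2 <= sin v / v * y ^ 2) by (apply Rmult_le_compat_l; nra).
      lra. }
  destruct (Rle_dec 0 x) as [Hx|Hx]; [now apply Hnonneg|].
  replace (k x) with (k (- x)) by (unfold k; rewrite cos_neg; f_equal; f_equal; ring).
  apply Hnonneg; lra.
Qed.
End SincQuadratic.

(* The quadratic majorant of -cos at any v in [-π, π]: its tangent plus the
   curvature sinc(v), which touches -cos again at -v. *)
Lemma neg_cos_majorant v x : -PI <= v <= PI ->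
  - cos x <= - cos v + sin v * (x - v) + sinc v / 2 * (x - v) ^ 2.
Proof.
  intros Hv. unfold sinc. destruct (Req_EM_T v 0) as [Hv0|Hv0].
  { subst v. rewrite cos_0, sin_0. pose proof (one_sub_cos_le x). lra. }
  assert (Hsym : forall u y, 0 < u <= PI ->
            - cos y <= - cos u + sin u * (y - u) + sin u / u / 2 * (y - u) ^ 2).
  { intros u y Hu. pose proof (sinc_quadratic_min u Hu y) as Hk.
    replace (- cos u + sin u * (y - u) + sin u / u / 2 * (y - u) ^ 2)
      with (- cos u + sin u / u * y ^ 2 / 2 - sin u / u * u ^ 2 / 2) by (field; lra).
    lra. }
  destruct (Rle_dec 0 v) as [Hpos|Hneg]; [apply Hsym; lra|].
  pose proof (Hsym (- v) (- x) ltac:(lra)) as H.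
  rewrite !cos_neg, sin_neg in H.
  replace (- sin v / - v) with (sin v / v) in H by (field; lra).
  replace (- sin v * (- x - - v)) with (sin v * (x - v)) in H by ring.
  replace ((- x - - v) ^ 2) with ((x - v) ^ 2) in H by ring.
  exact H.
Qed.

Lemma Rmod_bounds a p : 0 < p -> 0 <= Rmod a p < p.
Proof.
  intros Hp. unfold Rmod. destruct (base_Int_part (a / p)) as [Hlo Hhi].
  set (n := IZR (Int_part (a / p))) in *.
  assert (Ea : a = p * (a / p)) by (field; lra).
  split; rewrite Ea at 1; nra.
Qed.

Lemma wden_phase t phi theta : 0 < t -> exists n : Z,
  -PI <= 2 * t * wden t phi theta < PI /\
  2 * theta * t - phi = 2 * t * wden t phi theta + 2 * IZR n * PI.
Proof.
  intros Ht. pose proof PI_RGT_0.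
  set (a := theta - phi / (2 * t) + PI / (2 * t)).
  set (p := 2 * PI / (2 * t)).
  exists (Int_part (a / p)).
  assert (Hp : 0 < p) by (unfold p; apply Rdiv_lt_0_compat; lra).
  pose proof (Rmod_bounds a p Hp) as Hmod.
  assert (Ew : 2 * t * wden t phi theta = 2 * t * Rmod a p - PI)
    by (unfold wden; fold a p; field; lra).
  rewrite Ew. split; [split|].
  - nra.
  - assert (Hlt : 2 * t * Rmod a p < 2 * t * p) by (apply Rmult_lt_compat_l; lra).
    replace (2 * t * p) with (2 * PI) in Hlt by (unfold p; field; lra). lra.
  - unfold Rmod, p, a. field. lra.
Qed.

(* Rescaling the majorant of -cos from the angle x = 2θt - φ - 2nπ to θ:
   if θ' has reduced phase v, then f is majorized by its quadratic model at θ'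
   with curvature 4t²r·sinc(v). *)
Lemma fcos_majorant r t phi b theta' v n theta :
  0 <= r -> 0 < t -> -PI <= v <= PI ->
  2 * theta' * t - phi = v + 2 * IZR n * PI ->
  fcos r t phi b theta <=
  fcos r t phi b theta' + fcos' r t phi theta' * (theta - theta')
  + / 2 * (4 * t ^ 2 * r * sinc v) * (theta - theta') ^ 2.
Proof.
  intros Hr Ht Hv Hphase.
  set (x := 2 * theta * t - phi - 2 * IZR n * PI).
  assert (Ex : 2 * theta * t - phi = x + 2 * IZR n * PI) by (unfold x; ring).
  assert (Ed : theta - theta' = (x - v) / (2 * t)).
  { apply (Rmult_eq_reg_l (2 * t)); [|lra].
    replace (2 * t * ((x - v) / (2 * t))) with (x - v) by (field; lra).
    unfold x. lra. }
  unfold fcos, fcos'. rewrite Hphase, Ex, Ed, !cos_periodZ, sin_periodZ.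
  pose proof (Rmult_le_compat_l r _ _ Hr (neg_cos_majorant v x Hv)) as Hmaj.
  replace (- r * cos x + b) with (r * - cos x + b) by ring.
  replace (- r * cos v + b + 2 * r * t * sin v * ((x - v) / (2 * t))
           + / 2 * (4 * t ^ 2 * r * sinc v) * ((x - v) / (2 * t)) ^ 2)
    with (r * (- cos v + sin v * (x - v) + sinc v / 2 * (x - v) ^ 2) + b)
    by (field; lra).
  lra.
Qed.

Lemma wcurv_sinc r t phi theta' : 0 < t ->
  (wden t phi theta' <> 0 \/ in_minset t phi theta') ->
  exists v n, -PI <= v <= PI /\ 2 * theta' * t - phi = v + 2 * IZR n * PI /\
              wcurv r t phi theta' = 4 * t ^ 2 * r * sinc v.
Proof.
  intros Ht Hw. pose proof PI_RGT_0. unfold wcurv.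
  destruct (excluded_middle_informative (in_minset t phi theta')) as [[m Hm]|Hm].
  - exists 0, m. unfold sinc. destruct (Req_EM_T 0 0) as [_|]; [|lra].
    repeat split; try lra. rewrite Hm. field. lra.
  - destruct Hw as [Hw|]; [|contradiction].
    destruct (wden_phase t phi theta' Ht) as [n [Hv Hphase]].
    exists (2 * t * wden t phi theta'), n.
    assert (Hv0 : 2 * t * wden t phi theta' <> 0)
      by (apply Rmult_integral_contrapositive; split; lra).
    repeat split; try lra.
    unfold sinc, fcos'. destruct (Req_EM_T _ 0) as [|_]; [contradiction|].
    rewrite Hphase, sin_periodZ. field. split; lra.
Qed.

Lemma qmaj_majorizes r t phi b theta' : 0 <= r -> 0 < t ->
  (wden t phi theta' <> 0 \/ in_minset t phi theta') ->
  qmaj r t phi b theta' theta' = fcos r t phi b theta' /\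
  (forall theta : R, qmaj r t phi b theta' theta >= fcos r t phi b theta).
Proof.
  intros Hr Ht Hw. split.
  - unfold qmaj. replace (theta' - theta') with 0 by ring. ring.
  - intros theta. destruct (wcurv_sinc r t phi theta' Ht Hw) as [v [n [Hv [Hphase Hcurv]]]].
    unfold qmaj. rewrite Hcurv.
    apply Rle_ge, (fcos_majorant r t phi b theta' v n theta Hr Ht Hv Hphase).
Qed.

Lemma sumR_le T (g h : nat -> R) :
  (forall i, (i < T)%nat -> g i <= h i) -> sumR T g <= sumR T h.
Proof.
  intros Hgh. unfold sumR.
  assert (Hin : forall i, In i (seq 0 T) -> g i <= h i)
    by (intros i Hi; apply in_seq in Hi; apply Hgh; lia).
  induction (seq 0 T) as [|i l IH]; simpl; [lra|].
  pose proof (Hin i (or_introl eq_refl)).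
  assert (fold_right Rplus 0 (map g l) <= fold_right Rplus 0 (map h l))
    by (apply IH; intros j Hj; apply Hin; now right).
  lra.
Qed.

Lemma sumR_quadratic T (a b c : nat -> R) (d : R) :
  sumR T (fun i => a i + b i * d + / 2 * c i * d ^ 2) =
  sumR T a + sumR T b * d + / 2 * sumR T c * d ^ 2.
Proof.
  unfold sumR. induction (seq 0 T) as [|i l IH]; cbn [map fold_right]; [ring|].
  rewrite IH. ring.
Qed.

(* The Newton step d = -B/W of a convex quadratic model decreases it:
   B d + W d²/2 = -B²/(2W) <= 0. *)
Lemma newton_step_decrease B W : 0 < W ->
  B * (- B / W) + / 2 * W * (- B / W) ^ 2 <= 0.
Proof.
  intros HW.
  replace (B * (- B / W) + / 2 * W * (- B / W) ^ 2) with (- (B ^ 2 / (2 * W)))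
    by (field; lra).
  assert (0 <= B ^ 2 / (2 * W)) by (apply Rdiv_le_0_compat; nra).
  lra.
Qed.

Theorem mainTheorem3 :
  (forall r t phi b theta' : R, 0 <= r -> 0 < t ->
     (wden t phi theta' <> 0 \/ in_minset t phi theta') ->
     qmaj r t phi b theta' theta' = fcos r t phi b theta' /\
     (forall theta : R, qmaj r t phi b theta' theta >= fcos r t phi b theta))
  /\
  (forall (T : nat) (r t phi b : nat -> R) (theta' : R),
     (forall i, (i < T)%nat -> 0 <= r i /\ 0 < t i) ->
     (forall i, (i < T)%nat -> wden (t i) (phi i) theta' <> 0 \/ in_minset (t i) (phi i) theta') ->
     sumR T (fun i => wcurv (r i) (t i) (phi i) theta') > 0 ->
     let thetap := theta' - sumR T (fun i => fcos' (r i) (t i) (phi i) theta')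
                            / sumR T (fun i => wcurv (r i) (t i) (phi i) theta') in
     sumR T (fun i => fcos (r i) (t i) (phi i) (b i) thetap)
       <= sumR T (fun i => fcos (r i) (t i) (phi i) (b i) theta')).
Proof.
  split; [exact qmaj_majorizes|].
  intros T r t phi b theta' Hrt Hw HW thetap.
  assert (Hmaj : sumR T (fun i => fcos (r i) (t i) (phi i) (b i) thetap) <=
                 sumR T (fun i => qmaj (r i) (t i) (phi i) (b i) theta' thetap)).
  { apply sumR_le. intros i Hi. destruct (Hrt i Hi) as [Hr Ht].
    apply Rge_le, (qmaj_majorizes (r i) (t i) (phi i) (b i) theta' Hr Ht (Hw i Hi)). }
  (* the summed model at θ⁺ is below its value Σ f_i(θ') at θ' *)
  unfold qmaj in Hmaj. rewrite sumR_quadratic in Hmaj.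
  replace (thetap - theta') with
    (- sumR T (fun i => fcos' (r i) (t i) (phi i) theta')
     / sumR T (fun i => wcurv (r i) (t i) (phi i) theta')) in Hmaj
    by (unfold thetap; field; lra).
  pose proof (newton_step_decrease (sumR T (fun i => fcos' (r i) (t i) (phi i) theta'))
                (sumR T (fun i => wcurv (r i) (t i) (phi i) theta')) HW).
  lra.
Qed.
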